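(* Let $(M,\mathcal T)$ be a closed pseudo 3-manifold with edge set $E$. If a solution $l(t)$ of the extended Ricci flow $\frac{d}{dt}l(t)=\widetilde K(l(t))$ converges to some $\widetilde l\in\mathbb R^E$ as $t\to+\infty$, then $\widetilde K(\widetilde l)=0$.
   Context: Closed pseudo 3-manifold $(M,\mathcal T)$: quotient of a disjoint union $\mathscr T$ of finitely many tetrahedra by affine isomorphisms pairing faces, every 2-face being paired with another; $E$ is the set of edge classes. For a tetrahedron $\sigma$ with vertices $v_1,\dots,v_4$ and $l\in\mathbb R^E$, $l_\sigma=(l_{ij})\in\mathbb R^6$, $l_{ij}=l(\text{class of } v_iv_j)$. Extended dihedral angles: for $(x_1,x_2,x_3)\in\mathbb R^3_{>0}$, $a_i$ is the Euclidean angle opposite $x_i$ if strict triangle inequalities hold, and $a_i=\pi$, $a_j=a_k=0$ if $x_i\ge x_j+x_k$. For $l\in\mathbb R^6$, $\{i,j,k,h\}=\{1,2,3,4\}$, $\alpha_{ij}(l)$ is the generalized angle opposite the side $e^{(l_{ij}+l_{kh})/2}$ in the generalized triangle with sides $e^{(l_{ij}+l_{kh})/2},e^{(l_{ik}+l_{jh})/2},e^{(l_{ih}+l_{jk})/2}$. The generalized Ricci curvature of $l\in\mathbb R^E$ is $\widetilde K_e(l)=2\pi-\sum\alpha_{ij}(l_\sigma)$, summed over pairs (tetrahedron $\sigma$, edge $v_iv_j$ of $\sigma$ in class $e$). *)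

From HB Require Import structures.
From mathcomp Require Import all_boot all_order all_algebra all_fingroup.
From mathcomp Require Import all_classical all_reals all_analysis.
Set Implicit Arguments. Unset Strict Implicit. Unset Printing Implicit Defensive.
Import Order.TTheory GRing.Theory Num.Theory.
Local Open Scope ring_scope.

(* Closed pseudo 3-manifold (M,T): tetrahedra 'I_ntet with vertices 'I_4.   *)
(* Face f of tetrahedron s is the face opposite vertex f.  Face f of s is   *)
(* glued to face (pair_face s f) of tetrahedron (pair_tet s f) by the affine *)
(* isomorphism determined by the vertex bijection (pair_map s f) (restricted *)
(* to the face).  Every face is paired with another face; the pairing is an  *)
(* involution.  E is the set of edge classes and ecls s i j is the class of  *)
(* the edge v_i v_j of s (i <> j), the classes being exactly the classes of *)
(* the equivalence relation generated by the face gluings.                  *)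

Definition node (n : nat) := ('I_n * 'I_4 * 'I_4)%type.

Definition glue_step (n : nat) (pt : 'I_n -> 'I_4 -> 'I_n)
  (pm : 'I_n -> 'I_4 -> {perm 'I_4}) (x y : node n) : bool :=
  let: (s, i, j) := x in
  (y == (s, j, i)) ||
  [exists f : 'I_4, [&& i != f, j != f & y == (pt s f, pm s f i, pm s f j)]].

Definition glue_rel (n : nat) pt pm : rel (node n) :=
  fun x y => @glue_step n pt pm x y || @glue_step n pt pm y x.

Record pseudo3 := Pseudo3 {
  ntet : nat;
  E : finType;
  pair_tet : 'I_ntet -> 'I_4 -> 'I_ntet;
  pair_face : 'I_ntet -> 'I_4 -> 'I_4;
  pair_map : 'I_ntet -> 'I_4 -> {perm 'I_4};
  ecls : 'I_ntet -> 'I_4 -> 'I_4 -> E;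
  pair_map_face : forall s f, pair_map s f f = pair_face s f;
  pair_other : forall s f, (pair_tet s f, pair_face s f) != (s, f);
  pair_tet_invol : forall s f,
    pair_tet (pair_tet s f) (pair_face s f) = s;
  pair_face_invol : forall s f,
    pair_face (pair_tet s f) (pair_face s f) = f;
  pair_map_invol : forall s f,
    pair_map (pair_tet s f) (pair_face s f) = (pair_map s f)^-1%g;
  ecls_quotient : forall s i j s' i' j', i != j -> i' != j' ->
    (ecls s i j == ecls s' i' j') =
    connect (glue_rel pair_tet pair_map) (s, i, j) (s', i', j');
  ecls_surj : forall e : E, exists s i j, i != j /\ ecls s i j = e
}.

Definition ext_angle (R : realType) (a b c : R) : R :=
  if b + c <= a then pi
  else if (a + c <= b) || (a + b <= c) then 0
  else acos ((b ^+ 2 + c ^+ 2 - a ^+ 2) / (2 * b * c)).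

Definition side (R : realType) (l : 'I_4 -> 'I_4 -> R) (i j k h : 'I_4) : R :=
  expR ((l i j + l k h) / 2).

(* alpha_ij(l) with {i,j,k,h} = {1,2,3,4} *)
Definition alpha (R : realType) (l : 'I_4 -> 'I_4 -> R) (i j k h : 'I_4) : R :=
  ext_angle (side l i j k h) (side l i k j h) (side l i h j k).

Definition v0 : 'I_4 := @Ordinal 4 0 isT.
Definition v1 : 'I_4 := @Ordinal 4 1 isT.
Definition v2 : 'I_4 := @Ordinal 4 2 isT.
Definition v3 : 'I_4 := @Ordinal 4 3 isT.

Definition tet_edges : seq ('I_4 * 'I_4 * 'I_4 * 'I_4) :=
  [:: (v0, v1, v2, v3); (v0, v2, v1, v3); (v0, v3, v1, v2);
      (v1, v2, v0, v3); (v1, v3, v0, v2); (v2, v3, v0, v1)].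

Definition lsig (T : pseudo3) (R : realType) (l : E T -> R) (s : 'I_(ntet T))
  : 'I_4 -> 'I_4 -> R := fun i j => l (ecls s i j).

Definition Ktilde (T : pseudo3) (R : realType) (l : E T -> R) (e : E T) : R :=
  2 * pi - \sum_(s < ntet T)
     \sum_(q <- tet_edges | ecls s q.1.1.1 q.1.1.2 == e)
        alpha (lsig l s) q.1.1.1 q.1.1.2 q.1.2 q.2.

From HB Require Import structures.
From mathcomp Require Import all_boot all_order all_algebra all_fingroup.
From mathcomp Require Import all_classical all_reals all_analysis.
From mathcomp Require Import lra.
Import Order.TTheory GRing.Theory Num.Theory.
Import numFieldNormedType.Exports.
Local Open Scope classical_set_scope.
Local Open Scope ring_scope.

(* For positive sides the extended angle is acos of the cosine-rule value
   clamped to [-1, 1], hence continuous in the sides; so K~ is continuous and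
   K~(l(t)) -> K~(l~).  Each l_e(t) thus converges while its derivative
   K~_e(l(t)) tends to some c, and the mean value theorem on [t, t + 1] gives
   derivative values close both to c and to l_e(t + 1) - l_e(t), which tends
   to 0; hence c = 0. *)

Section extended_angle.
Variable R : realType.

Definition clamp11 (x : R) : R := Num.max (-1) (Num.min 1 x).

Lemma clamp11_itv x : clamp11 x \in `[-1, 1].
Proof. by rewrite in_itv /= le_max lexx ge_max ge_min lexx /= andbT; lra. Qed.

Lemma clamp11_id x : x \in `[-1, 1] -> clamp11 x = x.
Proof.
by rewrite in_itv /= => /andP[x_ge x_le]; rewrite /clamp11 min_r // max_r.
Qed.

Lemma continuous_clamp11 : continuous clamp11.
Proof.
apply: max_fun_continuous; first exact: cst_continuous.
by apply: min_fun_continuous; [exact: cst_continuous | move=> ?; exact: cvg_id].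
Qed.

Lemma within_continuous_acos : {within `[-1, 1], continuous (@acos R)}.
Proof.
rewrite -cospi -cos0.
apply: segment_can_ge_continuous; first exact/ltW/pi_gt0.
  exact/continuous_subspaceT/continuous_cos.
exact: cosK.
Qed.

Lemma continuous_acos_clamp11 : continuous (acos \o clamp11).
Proof.
move=> x; apply: (@cvg_comp _ _ _ _ _ _ (within `[-1, 1] (nbhs (clamp11 x)))).
  move=> P /continuous_clamp11; apply: (@filterS _ (nbhs x)) => y /=.
  exact: (fun h => h (clamp11_itv y)).
exact: (subspace_continuousP _ _).1 within_continuous_acos _ (clamp11_itv x).
Qed.

Definition cosine_rule (a b c : R) : R :=
  (b ^+ 2 + c ^+ 2 - a ^+ 2) / (2 * b * c).

Lemma ext_angleE a b c : 0 < a -> 0 < b -> 0 < c ->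
  ext_angle a b c = acos (clamp11 (cosine_rule a b c)).
Proof.
move=> a_gt0 b_gt0 c_gt0; have bc_gt0 : 0 < 2 * b * c by rewrite !mulr_gt0.
rewrite /ext_angle /cosine_rule; case: ifPn => [bc_le_a|].
  have ratio_le : (b ^+ 2 + c ^+ 2 - a ^+ 2) / (2 * b * c) <= -1.
    by rewrite ler_pdivrMr //; nra.
  by rewrite /clamp11 min_r ?max_l ?acosN1 //; lra.
rewrite -ltNge => a_lt_bc; case: ifPn => [/orP degenerate|].
  have ratio_ge : 1 <= (b ^+ 2 + c ^+ 2 - a ^+ 2) / (2 * b * c).
    by rewrite ler_pdivlMr // mul1r; case: degenerate; nra.
  by rewrite /clamp11 min_l ?max_r ?acos1 //; lra.
rewrite negb_or -!ltNge => /andP[b_lt_ac c_lt_ab].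
rewrite clamp11_id // in_itv /= ler_pdivlMr // ler_pdivrMr //.
by apply/andP; split; nra.
Qed.

Lemma cvg_cosine_rule {T : Type} {F : set_system T} {FF : Filter F}
    (fa fb fc : T -> R) (a b c : R) : 0 < b -> 0 < c ->
  fa @ F --> a -> fb @ F --> b -> fc @ F --> c ->
  cosine_rule (fa t) (fb t) (fc t) @[t --> F] --> cosine_rule a b c.
Proof.
move=> b_gt0 c_gt0 fa_a fb_b fc_c; apply: cvgM.
  by apply: cvgB; [apply: cvgD|]; apply: cvgM.
apply: cvgV; first by rewrite !mulf_neq0 ?gt_eqF.
by apply: cvgM => //; apply: cvgM => //; exact: cvg_cst.
Qed.

Lemma cvg_ext_angle {T : Type} {F : set_system T} {FF : Filter F}
    (fa fb fc : T -> R) (a b c : R) : 0 < a -> 0 < b -> 0 < c ->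
  fa @ F --> a -> fb @ F --> b -> fc @ F --> c ->
  ext_angle (fa t) (fb t) (fc t) @[t --> F] --> ext_angle a b c.
Proof.
move=> a_gt0 b_gt0 c_gt0 fa_a fb_b fc_c.
have angle_acos : \forall t \near F,
    acos (clamp11 (cosine_rule (fa t) (fb t) (fc t)))
    = ext_angle (fa t) (fb t) (fc t).
  near=> t; rewrite ext_angleE //; near: t.
  - exact: cvgr_gt fa_a _ a_gt0.
  - exact: cvgr_gt fb_b _ b_gt0.
  - exact: cvgr_gt fc_c _ c_gt0.
apply: cvg_trans (near_eq_cvg angle_acos) _; rewrite ext_angleE //.
apply: (@continuous_cvg _ _ _ _ _ _ (acos \o clamp11)).
  exact: continuous_acos_clamp11.
exact: cvg_cosine_rule.
Unshelve. all: by end_near. Qed.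
End extended_angle.

Lemma cvg_alpha (R : realType) {X : Type} {F : set_system X} {FF : Filter F}
    (L : X -> 'I_4 -> 'I_4 -> R) (l : 'I_4 -> 'I_4 -> R) :
  (forall i j, L t i j @[t --> F] --> l i j) ->
  forall i j k h, alpha (L t) i j k h @[t --> F] --> alpha l i j k h.
Proof.
move=> L_l i j k h.
have cvg_side p q r s : side (L t) p q r s @[t --> F] --> side l p q r s.
  apply: (@continuous_cvg _ _ _ _ _ _ expR); first exact: continuous_expR.
  by apply: cvgM; [apply: cvgD; apply: L_l | exact: cvg_cst].
by apply: cvg_ext_angle; rewrite ?expR_gt0 //; apply: cvg_side.
Qed.

Lemma cvg_Ktilde (T : pseudo3) (R : realType) {X : Type} {F : set_system X}
    {FF : Filter F} (L : X -> E T -> R) (l : E T -> R) :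
  (forall e, L t e @[t --> F] --> l e) ->
  forall e, Ktilde (L t) e @[t --> F] --> Ktilde l e.
Proof.
move=> L_l e; apply: cvgB; first exact: cvg_cst.
apply: cvg_big => [|s _]; first exact: add_continuous.
apply: cvg_big => [|q _]; first exact: add_continuous.
by apply: cvg_alpha => i j; apply: L_l.
Qed.

Lemma near_pinfty_forall_ge (R : realType) (P : R -> Prop) :
  (\forall x \near +oo, P x) -> \forall t \near +oo, forall x, t <= x -> P x.
Proof.
move=> [M [M_real MP]]; exists M; split=> // t Mt x tx.
by apply: MP; exact: lt_le_trans tx.
Qed.

Lemma cvg_derive_pinfty_eq0 (R : realType) (f df : R -> R) (a c : R) :
  (\forall t \near +oo, is_derive t (1 : R) f (df t)) ->
  f t @[t --> +oo] --> a -> df t @[t --> +oo] --> c -> c = 0.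
Proof.
move=> f_df f_a df_c; apply/eqP; rewrite -normr_le0.
apply/ler_addgt0Pr => e e_gt0.
rewrite add0r; near (pinfty_nbhs R) => t.
have f_df_ge : forall x, t <= x -> is_derive x 1 f (df x).
  by near: t; exact: near_pinfty_forall_ge.
have f_close : forall x, t <= x -> `|a - f x| < e / 4.
  by near: t; apply: near_pinfty_forall_ge; apply: cvgr_dist_lt => //; lra.
have df_close : forall x, t <= x -> `|c - df x| < e / 2.
  by near: t; apply: near_pinfty_forall_ge; apply: cvgr_dist_lt => //; lra.
have [xi /[!in_itv] /andP[t_xi _]] : exists2 xi, xi \in `]t, t + 1[ &
    f (t + 1) - f t = df xi * (t + 1 - t).
  apply: MVT; first by rewrite ltrDl.
    by move=> x /[!in_itv] /andP[/ltW tx _]; exact: f_df_ge.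
  apply: derivable_within_continuous => x /[!in_itv] /andP[tx _].
  by case: (f_df_ge x tx).
rewrite addrAC subrr add0r mulr1 => df_xi.
have c_le : `|c| <= `|c - df xi| + `|df xi|.
  by rewrite (le_trans _ (ler_normD _ _)) // subrK.
have df_le : `|df xi| <= `|a - f t| + `|a - f (t + 1)|.
  have -> : df xi = (a - f t) - (a - f (t + 1)) by rewrite -df_xi; lra.
  exact: ler_normB.
have := df_close xi (ltW t_xi); have := f_close t (lexx t).
have := f_close (t + 1) (ler_wpDr ler01 (lexx t)).
lra.
Unshelve. all: by end_near. Qed.

Theorem mainTheorem10 (R : realType) (T : pseudo3) (l : R -> E T -> R)
  (lt : E T -> R) :
  (forall t : R, 0 < t -> forall e : E T,
     is_derive t 1 (fun u : R => l u e) (Ktilde (l t) e)) ->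
  (forall e : E T, l t e @[t --> +oo%R] --> lt e) ->
  forall e : E T, Ktilde lt e = 0.
Proof.
move=> ricci_flow l_lt e.
apply: (@cvg_derive_pinfty_eq0 _ (l^~ e) (fun t => Ktilde (l t) e) (lt e)).
- near=> t; apply: ricci_flow; near: t; exact: nbhs_pinfty_gt.
- exact: l_lt.
- exact: cvg_Ktilde.
Unshelve. all: by end_near. Qed.
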